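(* Let $\mathcal A\in\mathbb C^{n_1\times n_2\times n_3}$, $\mathcal A^-\in\mathcal A\{1\}$ and $\mathcal X\in\mathbb C^{n_2\times n_1\times n_3}$. The following are equivalent: (a) $\mathcal X=\mathcal A^-\mathcal A\mathcal A^*$; (b) $\mathcal X(\mathcal A^\dagger)^*\mathcal X=\mathcal X$, $(\mathcal A^\dagger)^*\mathcal X(\mathcal A^\dagger)^*=(\mathcal A^\dagger)^*$, $\mathcal A\mathcal X=\mathcal A\mathcal A^*$ and $\mathcal X(\mathcal A^\dagger)^*=\mathcal A^-\mathcal A$; (c) $\mathcal X(\mathcal A^\dagger)^*\mathcal X=\mathcal X$, $(\mathcal A^\dagger)^*\mathcal X(\mathcal A^\dagger)^*=(\mathcal A^\dagger)^*$, $(\mathcal A^\dagger)^*\mathcal X=\mathcal A\mathcal A^\dagger$ and $\mathcal X(\mathcal A^\dagger)^*=\mathcal A^-\mathcal A$; (d) $\mathcal X(\mathcal A^\dagger)^*\mathcal X=\mathcal X$, $(\mathcal A^\dagger)^*\mathcal X=\mathcal A\mathcal A^\dagger$ and $\mathcal X(\mathcal A^\dagger)^*=\mathcal A^-\mathcal A$; (e) $\mathcal A^-\mathcal A\mathcal X=\mathcal X$ and $\mathcal A\mathcal X=\mathcal A\mathcal A^*$.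
   Context: Fix a nonsingular matrix $M\in\mathbb C^{n_3\times n_3}$. For $\mathcal C\in\mathbb C^{n_1\times n_2\times n_3}$ let $\widehat{\mathcal C}=\mathcal C\times_3M$, i.e. $\widehat{\mathcal C}_{ijk}=\sum_{l=1}^{n_3}M_{kl}\mathcal C_{ijl}$, and let $\widehat{\mathcal C}^{(i)}$ denote its $i$-th frontal slice. The M-product $\mathcal C\star_M\mathcal D$ of $\mathcal C\in\mathbb C^{n_1\times n_2\times n_3}$ and $\mathcal D\in\mathbb C^{n_2\times l\times n_3}$ is the unique tensor with $\widehat{\mathcal C\star_M\mathcal D}^{(i)}=\widehat{\mathcal C}^{(i)}\widehat{\mathcal D}^{(i)}$ for all $i\in[n_3]$. Juxtaposition of tensors denotes the M-product. The conjugate transpose $\mathcal A^*$ is defined by $\widehat{\mathcal A^*}^{(i)}=(\widehat{\mathcal A}^{(i)})^*$. The Moore–Penrose inverse $\mathcal A^\dagger$ is the unique $\mathcal W$ satisfying $\mathcal A\mathcal W\mathcal A=\mathcal A$, $\mathcal W\mathcal A\mathcal W=\mathcal W$, $(\mathcal A\mathcal W)^*=\mathcal A\mathcal W$, $(\mathcal W\mathcal A)^*=\mathcal W\mathcal A$. $\mathcal A\{1\}$ is the set of all $\mathcal W$ with $\mathcal A\mathcal W\mathcal A=\mathcal A$. *)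

From HB Require Import structures.
From mathcomp Require Import all_boot all_algebra.
From mathcomp Require Import complex Rstruct.
Set Implicit Arguments. Unset Strict Implicit. Unset Printing Implicit Defensive.
Import GRing.Theory Num.Theory.
Local Open Scope ring_scope.

Definition C : numClosedFieldType := complex Rdefinitions.R.

(* A tensor in C^{n1 x n2 x n3}, given by its frontal slices: (A k) i j = A_{ijk}. *)
Definition tensor (n1 n2 n3 : nat) := {ffun 'I_n3 -> 'M[C]_(n1, n2)}.

Definition mode3 {n1 n2 n3 : nat} (M : 'M[C]_n3) (A : tensor n1 n2 n3)
  : tensor n1 n2 n3 := [ffun k => \sum_l M k l *: A l].

Definition ctrmx {m n : nat} (B : 'M[C]_(m, n)) : 'M[C]_(n, m) :=
  map_mx Num.conj (B^T).

(* M-product: the unique tensor whose transformed slices are the products of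
   the transformed slices (M nonsingular, so the inverse transform is invmx M). *)
Definition mprod {n1 n2 l n3 : nat} (M : 'M[C]_n3)
  (A : tensor n1 n2 n3) (B : tensor n2 l n3) : tensor n1 l n3 :=
  mode3 (invmx M) [ffun k => mode3 M A k *m mode3 M B k].

Definition mctr {n1 n2 n3 : nat} (M : 'M[C]_n3) (A : tensor n1 n2 n3)
  : tensor n2 n1 n3 :=
  mode3 (invmx M) [ffun k => ctrmx (mode3 M A k)].

Definition is_mpinv {n1 n2 n3 : nat} (M : 'M[C]_n3)
  (A : tensor n1 n2 n3) (W : tensor n2 n1 n3) : Prop :=
  [/\ mprod M (mprod M A W) A = A,
      mprod M (mprod M W A) W = W,
      mctr M (mprod M A W) = mprod M A W &
      mctr M (mprod M W A) = mprod M W A].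

Definition is_inner_inv {n1 n2 n3 : nat} (M : 'M[C]_n3)
  (A : tensor n1 n2 n3) (W : tensor n2 n1 n3) : Prop :=
  mprod M (mprod M A W) A = A.

From HB Require Import structures.
From mathcomp Require Import all_boot all_algebra.
From mathcomp Require Import complex Rstruct.
Set Implicit Arguments. Unset Strict Implicit. Unset Printing Implicit Defensive.
Import GRing.Theory Num.Theory.
Local Open Scope ring_scope.

(* Since M is invertible, the transform A |-> A x_3 M is a bijection turning the
   M-product into slicewise matrix multiplication and the tensor conjugate
   transpose into slicewise conjugate transposition.  Tensors thus form an
   associative category with an involution reversing products, and the
   theorem is a computation in it using only the Penrose equations of A^dagger
   and the inner-inverse equation of A^-.  With P := (A^dagger)^*, the Penrose
   equations give A^* P = A^dagger A and P A^* = A A^dagger, and they make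
   A^- A act as the identity on the right of P. *)

Lemma ctrmx_mul m n p (A : 'M[C]_(m, n)) (B : 'M[C]_(n, p)) :
  ctrmx (A *m B) = ctrmx B *m ctrmx A.
Proof. by rewrite /ctrmx trmx_mul map_mxM. Qed.

Lemma mode3M n1 n2 n3 (N M : 'M[C]_n3) (A : tensor n1 n2 n3) :
  mode3 N (mode3 M A) = mode3 (N *m M) A.
Proof.
apply/ffunP=> k; rewrite !ffunE.
under eq_bigr => l _ do rewrite ffunE scaler_sumr.
rewrite exchange_big /=; apply: eq_bigr => j _.
by rewrite mxE scaler_suml; apply: eq_bigr => l _; rewrite scalerA.
Qed.

Lemma mode3_id n1 n2 n3 (A : tensor n1 n2 n3) : mode3 1%:M A = A.
Proof.
apply/ffunP=> k; rewrite ffunE (bigD1 k) //= big1 ?addr0.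
  by rewrite mxE eqxx scale1r.
by move=> l /negbTE nlk; rewrite mxE eq_sym nlk scale0r.
Qed.

Section MProduct.
Variables (n3 : nat) (M : 'M[C]_n3).
Hypothesis unitM : M \in unitmx.

Local Notation "A ⋆ B" := (mprod M A B) (at level 40, left associativity).
Local Notation "A ^*" := (mctr M A).

Lemma mode3_invK n1 n2 (A : tensor n1 n2 n3) : mode3 M (mode3 (invmx M) A) = A.
Proof. by rewrite mode3M mulmxV // mode3_id. Qed.

Lemma mode3K n1 n2 (A : tensor n1 n2 n3) : mode3 (invmx M) (mode3 M A) = A.
Proof. by rewrite mode3M mulVmx // mode3_id. Qed.

Lemma mode3_inj n1 n2 (A B : tensor n1 n2 n3) :
  (forall k, mode3 M A k = mode3 M B k) -> A = B.
Proof.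
by move=> eqAB; rewrite -(mode3K A) -(mode3K B); congr mode3; apply/ffunP.
Qed.

Lemma mode3_mprod n1 n2 l (A : tensor n1 n2 n3) (B : tensor n2 l n3) k :
  mode3 M (A ⋆ B) k = mode3 M A k *m mode3 M B k.
Proof. by rewrite /mprod mode3_invK ffunE. Qed.

Lemma mode3_mctr n1 n2 (A : tensor n1 n2 n3) k :
  mode3 M A^* k = ctrmx (mode3 M A k).
Proof. by rewrite /mctr mode3_invK ffunE. Qed.

Lemma mprodA n1 n2 n4 n5 (A : tensor n1 n2 n3) (B : tensor n2 n4 n3)
  (D : tensor n4 n5 n3) : A ⋆ B ⋆ D = A ⋆ (B ⋆ D).
Proof. by apply: mode3_inj => k; rewrite !mode3_mprod mulmxA. Qed.

Lemma mctr_mprod n1 n2 n4 (A : tensor n1 n2 n3) (B : tensor n2 n4 n3) :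
  (A ⋆ B)^* = B^* ⋆ A^*.
Proof. by apply: mode3_inj => k; rewrite !(mode3_mprod, mode3_mctr) ctrmx_mul. Qed.

Section MoorePenrose.
Variables (n1 n2 : nat) (A : tensor n1 n2 n3) (Ad : tensor n2 n1 n3).
Hypothesis mpinvAd : is_mpinv M A Ad.

Lemma mctr_mul_mpinv : A^* ⋆ Ad^* = Ad ⋆ A.
Proof. by case: mpinvAd => _ _ _ hermAdA; rewrite -mctr_mprod hermAdA. Qed.

Lemma mctr_mpinv_mul : Ad^* ⋆ A^* = A ⋆ Ad.
Proof. by case: mpinvAd => _ _ hermAAd _; rewrite -mctr_mprod hermAAd. Qed.

Lemma mctr_mpinv_proj : Ad^* ⋆ Ad ⋆ A = Ad^*.
Proof.
case: mpinvAd => _ AdAAd _ hermAdA.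
by rewrite -[in RHS]AdAAd mctr_mprod hermAdA mprodA.
Qed.

Lemma mctr_proj_mpinv : A^* ⋆ A ⋆ Ad = A^*.
Proof.
case: mpinvAd => AAdA _ hermAAd _.
by rewrite -[in RHS]AAdA mctr_mprod hermAAd mprodA.
Qed.

Variable Am : tensor n2 n1 n3.
Hypothesis innerAm : is_inner_inv M A Am.

Lemma inner_inv_projK p (Y : tensor n2 p n3) : Am ⋆ A ⋆ (Am ⋆ A ⋆ Y) = Am ⋆ A ⋆ Y.
Proof. by rewrite !mprodA -(mprodA A Am) -(mprodA (A ⋆ Am)) innerAm. Qed.

Lemma mctr_mpinv_inner : Ad^* ⋆ Am ⋆ A = Ad^*.
Proof.
rewrite -{1}mctr_mpinv_proj !mprodA -(mprodA A Am A) innerAm.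
by rewrite -mprodA mctr_mpinv_proj.
Qed.

Variable X : tensor n2 n1 n3.
Local Notation P := Ad^*.

Lemma inner_inv_solutionP :
  X = Am ⋆ A ⋆ A^* <-> Am ⋆ A ⋆ X = X /\ A ⋆ X = A ⋆ A^*.
Proof.
split=> [-> | [projX AX]]; last by rewrite -projX !mprodA AX.
split; first exact: inner_inv_projK.
by rewrite -!mprodA innerAm.
Qed.

Lemma inner_inv_solution_props : X = Am ⋆ A ⋆ A^* ->
  [/\ X ⋆ P ⋆ X = X, P ⋆ X ⋆ P = P, P ⋆ X = A ⋆ Ad & X ⋆ P = Am ⋆ A].
Proof.
move=> defX; have XP : X ⋆ P = Am ⋆ A.
  case: mpinvAd => AAdA _ _ _.
  by rewrite defX !mprodA mctr_mul_mpinv -(mprodA A Ad A) AAdA.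
split=> //.
- by rewrite XP; case/inner_inv_solutionP: defX.
- by rewrite mprodA XP -mprodA mctr_mpinv_inner.
- by rewrite defX -!mprodA mctr_mpinv_inner mctr_mpinv_mul.
Qed.

Lemma mul_solution_of_mctr_mpinv : P ⋆ X = A ⋆ Ad -> A ⋆ X = A ⋆ A^*.
Proof.
case: mpinvAd => AAdA _ _ _ PX.
rewrite -{1}AAdA (mprodA A Ad A) -mctr_mul_mpinv !mprodA PX.
by rewrite -(mprodA A^*) mctr_proj_mpinv.
Qed.

End MoorePenrose.
End MProduct.

Theorem theorem3p11 (n1 n2 n3 : nat) (M : 'M[C]_n3) (HM : M \in unitmx)
  (A : tensor n1 n2 n3) (Am : tensor n2 n1 n3) (Ad : tensor n2 n1 n3)
  (X : tensor n2 n1 n3)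
  (HAm : is_inner_inv M A Am) (HAd : is_mpinv M A Ad) :
  let P := mctr M Ad in
  [<->
   (* (a) *) X = mprod M (mprod M Am A) (mctr M A);
   (* (b) *) mprod M (mprod M X P) X = X /\ mprod M (mprod M P X) P = P /\
             mprod M A X = mprod M A (mctr M A) /\ mprod M X P = mprod M Am A;
   (* (c) *) mprod M (mprod M X P) X = X /\ mprod M (mprod M P X) P = P /\
             mprod M P X = mprod M A Ad /\ mprod M X P = mprod M Am A;
   (* (d) *) mprod M (mprod M X P) X = X /\
             mprod M P X = mprod M A Ad /\ mprod M X P = mprod M Am A;
   (* (e) *) mprod M (mprod M Am A) X = X /\ mprod M A X = mprod M A (mctr M A)].
Proof.
move=> P.
have solutionP := inner_inv_solutionP HM HAm X.
have props := inner_inv_solution_props HM HAd HAm (X := X).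
tfae.
- move=> defX; have [XPX PXP _ XP] := props defX.
  by have [_ AX] := solutionP.1 defX.
- case=> XPX [PXP [AX XP]].
  have defX : X = mprod M (mprod M Am A) (mctr M A).
    by apply/solutionP; rewrite -{1}XP.
  by have [] := props defX.
- by case=> XPX [_ PXX].
- case=> XPX [PX XP]; split; first by rewrite -{1}XP.
  exact: (mul_solution_of_mctr_mpinv HM HAd PX).
- by move/solutionP.
Qed.
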